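(* Let $\rho^s$ be a qubit state on $H_2=\mathbb{C}^2$ and let $\rho=\rho^s\otimes|0\rangle\langle 0|$ be the two-qubit state on $H_2\otimes H_2$ obtained by adjoining an auxiliary qubit in state $|0\rangle$. Then there exists an incoherent operation $\Lambda$ on $H_2\otimes H_2$ such that $\Lambda(\rho)$ is Bell-nonlocal if and only if $\rho^s$ has non-vanishing coherence, i.e. $\rho^s_{01}=\langle 0|\rho^s|1\rangle\neq 0$.
   Context: Coherence is taken with respect to the fixed computational basis $\{|0\rangle,|1\rangle\}$ (and the product computational basis $\{|i\rangle|j\rangle\}$ on $H_2\otimes H_2$). A state is incoherent if it is diagonal in this basis; $\rho^s$ has non-vanishing coherence if it is not incoherent (equivalently its $l_1$-norm coherence $\mathcal{C}_{l_1}(\rho^s)=\sum_{i\neq j}|\rho^s_{ij}|$ is nonzero). An incoherent operation is a completely positive trace-preserving map $\Lambda(\rho)=\sum_j K_j\rho K_j^\dagger$ whose Kraus operators satisfy $K_j\mathcal{I}K_j^\dagger\subseteq\mathcal{I}$, where $\mathcal{I}$ is the set of incoherent states. A bipartite state is Bell-nonlocal if it violates some Bell inequality, i.e. its measurement statistics do not admit a local hidden variable model. *)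

From HB Require Import structures.
From mathcomp Require Import all_boot all_order all_algebra.
From mathcomp Require Import reals.
From mathcomp Require Export complex mxtens.
Set Implicit Arguments. Unset Strict Implicit. Unset Printing Implicit Defensive.
Import Order.TTheory GRing.Theory Num.Theory.
Local Open Scope ring_scope.

Section Quantum.
Variable R : realType.
Local Notation C := (R[i]).

Definition adjmx {m n} (A : 'M[C]_(m, n)) : 'M[C]_(n, m) :=
  (map_mx (fun z : C => z^*) A)^T.

Definition psd {n} (A : 'M[C]_n) : Prop :=
  adjmx A = A /\ forall v : 'cV[C]_n, 0 <= (adjmx v *m A *m v) 0 0.

Definition is_state {n} (rho : 'M[C]_n) : Prop := psd rho /\ \tr rho = 1.

Definition is_diag {n} (A : 'M[C]_n) : Prop :=
  forall i j : 'I_n, i != j -> A i j = 0.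

Definition incoherent_state {n} (rho : 'M[C]_n) : Prop :=
  is_state rho /\ is_diag rho.

Definition kraus_apply {n k} (K : 'I_k -> 'M[C]_n) (rho : 'M[C]_n) : 'M[C]_n :=
  \sum_(j < k) (K j *m rho *m adjmx (K j)).

(* incoherent operation: trace preserving Kraus family with
   K_j I K_j^dagger contained in (the cone of) incoherent states *)
Definition incoherent_op {n k} (K : 'I_k -> 'M[C]_n) : Prop :=
  \sum_(j < k) (adjmx (K j) *m K j) = 1%:M /\
  forall (j : 'I_k) (sigma : 'M[C]_n),
    incoherent_state sigma -> is_diag (K j *m sigma *m adjmx (K j)).

Definition povm {n m} (E : 'I_m -> 'M[C]_n) : Prop :=
  (forall a, psd (E a)) /\ \sum_(a < m) E a = 1%:M.

Definition lhv_model {nx ny na nb}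
    (p : 'I_nx -> 'I_ny -> 'I_na -> 'I_nb -> C) : Prop :=
  exists (L : nat) (q : 'I_L -> C)
         (PA : 'I_L -> 'I_nx -> 'I_na -> C) (PB : 'I_L -> 'I_ny -> 'I_nb -> C),
    (forall l, 0 <= q l) /\ \sum_(l < L) q l = 1 /\
    (forall l x a, 0 <= PA l x a) /\ (forall l x, \sum_(a < na) PA l x a = 1) /\
    (forall l y b, 0 <= PB l y b) /\ (forall l y, \sum_(b < nb) PB l y b = 1) /\
    forall x y a b, p x y a b = \sum_(l < L) q l * PA l x a * PB l y b.

Definition bell_nonlocal {dA dB} (rho : 'M[C]_(dA * dB)) : Prop :=
  exists (nx ny na nb : nat)
         (M : 'I_nx -> 'I_na -> 'M[C]_dA) (N : 'I_ny -> 'I_nb -> 'M[C]_dB),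
    (forall x, povm (M x)) /\ (forall y, povm (N y)) /\
    ~ lhv_model (fun x y a b => \tr ((M x a *t N y b) *m rho)).

Definition proj0 : 'M[C]_2 := delta_mx 0 0.

End Quantum.

(** If ρ^s is diagonal, so is ρ^s ⊗ |0⟩⟨0|, and an incoherent operation maps it
   to a diagonal state; a diagonal state has a local hidden variable model whose
   hidden variable is the basis index. Conversely, the CNOT permutation is an
   incoherent unitary taking ρ^s ⊗ |0⟩⟨0| to the maximally correlated state
   Σ ρ_ik |ii⟩⟨kk|. For c = ρ_01 ≠ 0 and r = |c|², Alice measuring Z and
   [[0, c], [c̄, 0]] and Bob measuring (1 - r²) Z ± r X reach the CHSH value
   2 + 2r² > 2, which no local hidden variable model can exceed. *)

From HB Require Import structures.
From mathcomp Require Import all_boot all_order all_algebra.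
From mathcomp Require Import reals complex mxtens perm.
From mathcomp Require Import ring.
Import Order.TTheory GRing.Theory Num.Theory.
Local Open Scope ring_scope.

Lemma big_ord2 (V : nmodType) (F : 'I_2 -> V) : \sum_(i < 2) F i = F 0 + F 1.
Proof. by rewrite big_ord_recl big_ord1; congr (_ + F _); apply: val_inj. Qed.

Lemma ord2P (i : 'I_2) : i = 0 \/ i = 1.
Proof. by case: i => -[|[|//]] Hi; [left | right]; apply: val_inj. Qed.

Lemma chsh_le2 (K : numDomainType) (a0 a1 b0 b1 : K) :
  -1 <= a0 <= 1 -> -1 <= a1 <= 1 -> -1 <= b0 <= 1 -> -1 <= b1 <= 1 ->
  a0 * b0 + a0 * b1 + a1 * b0 - a1 * b1 <= 2.
Proof.
rewrite -!(subr_ge0 (-1)) -!(subr_ge0 _ 1) !opprK.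
move=> /andP[a0m a0p] /andP[a1m a1p] /andP[b0m b0p] /andP[b1m b1p].
rewrite -subr_ge0 -(pmulr_rge0 _ (ltr0Sn K 1)).
(* 2 - CHSH is multilinear, hence equal to its interpolation at the vertices of
   the box, where it takes the values 0 and 4. *)
have -> : 2 * (2 - (a0 * b0 + a0 * b1 + a1 * b0 - a1 * b1)) =
    (a0 + 1) * (a1 + 1) * (1 - b0) + (a0 + 1) * (1 - a1) * (1 - b1) +
    (1 - a0) * (a1 + 1) * (b1 + 1) + (1 - a0) * (1 - a1) * (b0 + 1) by ring.
by rewrite !addr_ge0 // !mulr_ge0.
Qed.

Lemma subr_bounded (K : numDomainType) (u v : K) :
  0 <= u -> 0 <= v -> u + v = 1 -> -1 <= u - v <= 1.
Proof.
move=> u0 v0 uv; rewrite -uv -(subr_ge0 (- _)) -(subr_ge0 (u - v)) opprK.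
have -> : u - v + (u + v) = u + u by ring.
have -> : u + v - (u - v) = v + v by ring.
by rewrite !addr_ge0.
Qed.

Section Quantum.
Set Implicit Arguments.
Variable R : realType.
Local Notation C := R[i].

Lemma adjmxE m n (A : 'M[C]_(m, n)) i j : adjmx A i j = (A j i)^*.
Proof. by rewrite !mxE. Qed.

Lemma adjmxK m n (A : 'M[C]_(m, n)) : adjmx (adjmx A) = A.
Proof. by apply/matrixP => i j; rewrite !adjmxE conjCK. Qed.

Lemma adjmxM m n p (A : 'M[C]_(m, n)) (B : 'M[C]_(n, p)) :
  adjmx (A *m B) = adjmx B *m adjmx A.
Proof.
apply/matrixP => i j; rewrite adjmxE !mxE rmorph_sum; apply: eq_bigr => k _.
by rewrite !adjmxE rmorphM mulrC.
Qed.

Lemma adjmxD m n (A B : 'M[C]_(m, n)) : adjmx (A + B) = adjmx A + adjmx B.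
Proof. by apply/matrixP => i j; rewrite !(adjmxE, mxE) rmorphD. Qed.

Lemma adjmxZ m n (c : C) (A : 'M[C]_(m, n)) : adjmx (c *: A) = c^* *: adjmx A.
Proof. by apply/matrixP => i j; rewrite !(adjmxE, mxE) rmorphM. Qed.

Lemma hermitian_entry n (A : 'M[C]_n) i j : adjmx A = A -> A j i = (A i j)^*.
Proof. by move/matrixP/(_ j i) <-; rewrite adjmxE. Qed.

Lemma adjmx_perm_mx n (s : 'S_n) : adjmx (perm_mx s : 'M[C]_n) = perm_mx s^-1.
Proof.
rewrite -tr_perm_mx; congr (_^T); apply/matrixP => i j.
by rewrite !mxE; case: eqP; rewrite ?conjC0 ?conjC1.
Qed.

Lemma qformE n (A : 'M[C]_n) (v : 'cV[C]_n) :
  (adjmx v *m A *m v) 0 0 = \sum_i \sum_j (v i 0)^* * A i j * v j 0.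
Proof.
rewrite mxE exchange_big; apply: eq_bigr => j _.
by rewrite mxE mulr_suml; apply: eq_bigr => i _; rewrite adjmxE.
Qed.

Lemma psd_diag_ge0 n (A : 'M[C]_n) i : psd A -> 0 <= A i i.
Proof.
case=> _ /(_ (delta_mx i 0)); rewrite qformE (bigD1 i) //= [X in _ + X]big1 => [|k ki].
  rewrite addr0 (bigD1 i) //= [X in _ + X]big1 => [|j ji]; last first.
    by rewrite [delta_mx i 0 j 0]mxE (negbTE ji) mulr0.
  by rewrite !mxE !eqxx conjC1 mul1r mulr1 addr0.
by rewrite big1 // => j _; rewrite mxE (negbTE ki) conjC0 !mul0r.
Qed.

Lemma psd0 n : psd (0 : 'M[C]_n).
Proof.
split; first by apply/matrixP => i j; rewrite adjmxE !mxE conjC0.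
by move=> v; rewrite mulmx0 mul0mx mxE.
Qed.

Lemma psdD n (A B : 'M[C]_n) : psd A -> psd B -> psd (A + B).
Proof.
case=> hA qA [hB qB]; split; first by rewrite adjmxD hA hB.
by move=> v; rewrite mulmxDr mulmxDl mxE addr_ge0.
Qed.

Lemma psd_sum n k (F : 'I_k -> 'M[C]_n) : (forall j, psd (F j)) -> psd (\sum_j F j).
Proof. by move=> hF; apply: (big_ind (@psd R n)); [exact: psd0 | exact: psdD |]. Qed.

Lemma psdZ n (c : C) (A : 'M[C]_n) : 0 <= c -> psd A -> psd (c *: A).
Proof.
move=> c0 [hA qA]; split; first by rewrite adjmxZ hA conj_Creal // ger0_real.
by move=> v; rewrite -scalemxAr -scalemxAl mxE mulr_ge0.
Qed.

Lemma psd_congr n m (K : 'M[C]_(m, n)) (A : 'M[C]_n) : psd A -> psd (K *m A *m adjmx K).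
Proof.
case=> hA qA; split; first by rewrite !adjmxM adjmxK hA mulmxA.
by move=> v; have := qA (adjmx K *m v); rewrite adjmxM adjmxK !mulmxA.
Qed.

Lemma psd_outer n (w : 'cV[C]_n) : psd (w *m adjmx w).
Proof.
split; first by rewrite adjmxM adjmxK.
move=> v; have e : adjmx w *m v = adjmx (adjmx v *m w) by rewrite adjmxM adjmxK.
by rewrite mulmxA -mulmxA e mxE big_ord1 adjmxE mul_conjC_ge0.
Qed.

Lemma psd_delta n (i : 'I_n) : psd (delta_mx i i : 'M[C]_n).
Proof.
have -> : delta_mx i i = delta_mx i 0 *m adjmx (delta_mx i 0 : 'cV[C]_n).
  apply/matrixP => j k; rewrite !mxE big_ord1 !mxE.
  by case: (j == i); case: (k == i); rewrite ?conjC0 ?conjC1 ?mulr0 ?mulr1.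
exact: psd_outer.
Qed.

Lemma big_tens m n (F : 'I_(m * n) -> C) :
  \sum_r F r = \sum_(i < m) \sum_(j < n) F (mxtens_index (i, j)).
Proof.
rewrite pair_big (reindex (@mxtens_index m n)) /=; last first.
  by exists (@mxtens_unindex m n) => r _; rewrite ?mxtens_indexK ?mxtens_unindexK.
by apply: eq_bigr => -[].
Qed.

Lemma mxtrace_tens m n (A : 'M[C]_m) (B : 'M[C]_n) : \tr (A *t B) = \tr A * \tr B.
Proof.
rewrite /mxtrace big_tens mulr_suml; apply: eq_bigr => i _.
by rewrite mulr_sumr; apply: eq_bigr => j _; rewrite tensmxE.
Qed.

Lemma mxtrace_delta n (i : 'I_n) : \tr (delta_mx i i : 'M[C]_n) = 1.
Proof.
rewrite /mxtrace (bigD1 i) //= big1 ?addr0 => [|j /negbTE ji]; first by rewrite mxE eqxx.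
by rewrite mxE ji.
Qed.

Lemma diag_sum_delta n (A : 'M[C]_n) : is_diag A -> A = \sum_i A i i *: delta_mx i i.
Proof.
move=> dA; apply/matrixP => j k; rewrite summxE (bigD1 j) //= big1 => [|i /negbTE ij].
  rewrite addr0 !mxE eqxx /=; case: eqP => [-> |/eqP jk]; first by rewrite mulr1.
  by rewrite mulr0 dA // eq_sym.
by rewrite !mxE eq_sym ij mulr0.
Qed.

Lemma diag_psd n (A : 'M[C]_n) : is_diag A -> (forall i, 0 <= A i i) -> psd A.
Proof.
move=> dA A_ge0; rewrite (diag_sum_delta dA).
by apply: psd_sum => i; apply: psdZ; [exact: A_ge0 | exact: psd_delta].
Qed.

Lemma is_diag_tens m n (A : 'M[C]_m) (B : 'M[C]_n) :
  is_diag A -> is_diag B -> is_diag (A *t B).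
Proof.
move=> dA dB r s; rewrite -[r]mxtens_unindexK -[s]mxtens_unindexK.
case: (mxtens_unindex r) (mxtens_unindex s) => [i j] [k l] rs; rewrite tensmxE.
have [ik|/dA->] := eqVneq i k; last by rewrite mul0r.
by rewrite dB ?mulr0 //; apply: contraNneq rs => jl; rewrite ik jl.
Qed.

Lemma incoherent_state_delta n (i : 'I_n) : incoherent_state (delta_mx i i : 'M[C]_n).
Proof.
split; first by split; [exact: psd_delta | exact: mxtrace_delta].
move=> j k jk; rewrite mxE; case: eqP => [ji|] //; case: eqP => [ki|] //.
by rewrite ji ki eqxx in jk.
Qed.

Lemma incoherent_state_tens m n (A : 'M[C]_m) (B : 'M[C]_n) :
  incoherent_state A -> incoherent_state B -> incoherent_state (A *t B).
Proof.
move=> [[psdA trA] dA] [[psdB trB] dB]; have dAB := is_diag_tens dA dB.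
split=> //; split; last by rewrite mxtrace_tens trA trB mulr1.
apply: diag_psd => // r; rewrite -[r]mxtens_unindexK tensmxE.
by rewrite mulr_ge0 ?psd_diag_ge0.
Qed.

Lemma kraus_apply_trace n k (K : 'I_k -> 'M[C]_n) (X : 'M[C]_n) :
  \sum_j (adjmx (K j) *m K j) = 1%:M -> \tr (kraus_apply K X) = \tr X.
Proof.
move=> TP; rewrite /kraus_apply raddf_sum /=.
under eq_bigr do rewrite mxtrace_mulC mulmxA.
by rewrite -raddf_sum /= -mulmx_suml TP mul1mx.
Qed.

Lemma kraus_apply_psd n k (K : 'I_k -> 'M[C]_n) (X : 'M[C]_n) :
  psd X -> psd (kraus_apply K X).
Proof. by move=> psdX; apply: psd_sum => j; apply: psd_congr. Qed.

Lemma incoherent_op_state n k (K : 'I_k -> 'M[C]_n) (rho : 'M[C]_n) :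
  incoherent_op K -> incoherent_state rho -> incoherent_state (kraus_apply K rho).
Proof.
move=> [TP K_incoh] [[psd_rho tr_rho] d_rho].
split; first by split; [exact: kraus_apply_psd | rewrite kraus_apply_trace].
move=> r s rs; rewrite /kraus_apply (diag_sum_delta d_rho) summxE big1 // => j _.
rewrite mulmx_sumr mulmx_suml summxE big1 // => i _.
by rewrite -scalemxAr -scalemxAl mxE K_incoh ?mulr0 //; exact: incoherent_state_delta.
Qed.

Lemma povm_diag_ge0 n m (E : 'I_m -> 'M[C]_n) a i : povm E -> 0 <= E a i i.
Proof. by case=> psdE _; exact: psd_diag_ge0. Qed.

Lemma povm_diag_sum n m (E : 'I_m -> 'M[C]_n) i : povm E -> \sum_a E a i i = 1.
Proof. by case=> _ sumE; rewrite -summxE sumE mxE eqxx. Qed.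

Lemma incoherent_state_local dA dB (rho : 'M[C]_(dA * dB)) :
  incoherent_state rho -> ~ bell_nonlocal rho.
Proof.
move=> [[psd_rho tr_rho] d_rho] [nx [ny [na [nb [M [N [povmM [povmN no_lhv]]]]]]]].
apply: no_lhv; pose i (l : 'I_(dA * dB)) := (mxtens_unindex l).1.
pose j (l : 'I_(dA * dB)) := (mxtens_unindex l).2.
exists (dA * dB), (fun l => rho l l),
  (fun l x a => M x a (i l) (i l)), (fun l y b => N y b (j l) (j l)).
do !split=> // *; rewrite ?povm_diag_ge0 ?povm_diag_sum ?psd_diag_ge0 //.
rewrite /mxtrace; apply: eq_bigr => r _.
rewrite mxE (bigD1 r) //= big1 ?addr0 => [|t tr]; last by rewrite d_rho ?mulr0 // eq_sym.
by rewrite -{1 2}[r]mxtens_unindexK tensmxE mulrC mulrA.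
Qed.

Lemma kraus_apply_perm n (s : 'S_n) (X : 'M[C]_n) :
  kraus_apply (fun _ : 'I_1 => perm_mx s) X = \matrix_(i, j) X (s i) (s j).
Proof.
rewrite /kraus_apply big_ord1 adjmx_perm_mx -row_permE -col_permE.
by apply/matrixP => i j; rewrite !mxE.
Qed.

Lemma perm_mx_incoherent n (s : 'S_n) : incoherent_op (fun _ : 'I_1 => perm_mx s : 'M[C]_n).
Proof.
split; first by rewrite big_ord1 adjmx_perm_mx -perm_mxM mulVg perm_mx1.
move=> _ sigma [_ d_sigma] i j ij.
have := kraus_apply_perm s sigma; rewrite /kraus_apply big_ord1 => ->.
by rewrite mxE d_sigma // (inj_eq perm_inj).
Qed.

(* Conjugation by [perm_mx s] reads entries at [(s r, s t)], so [s] is the inverse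
   of the CNOT map |i, j⟩ ↦ |i, j + i⟩. *)
Definition cnot_index n (r : 'I_(n.+1 * n.+1)) : 'I_(n.+1 * n.+1) :=
  mxtens_index ((mxtens_unindex r).1, (mxtens_unindex r).2 - (mxtens_unindex r).1).

Lemma cnot_indexE n (i j : 'I_n.+1) :
  cnot_index (mxtens_index (i, j)) = mxtens_index (i, j - i).
Proof. by rewrite /cnot_index mxtens_indexK. Qed.

Lemma cnot_index_inj n : injective (@cnot_index n).
Proof.
move=> r s; rewrite -[r]mxtens_unindexK -[s]mxtens_unindexK.
case: (mxtens_unindex r) (mxtens_unindex s) => [i j] [k l].
rewrite !cnot_indexE => /(can_inj (@mxtens_indexK _ _))/eqP.
by rewrite xpair_eqE => /andP[/eqP <- /eqP/addIr ->].
Qed.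

Definition cnot n : 'S_(n.+1 * n.+1) := perm (@cnot_index_inj n).

Definition maxcorr n (rho : 'M[C]_n) : 'M[C]_(n * n) :=
  \matrix_(r, s) let: (i, j) := mxtens_unindex r in let: (k, l) := mxtens_unindex s in
    ((i == j) && (k == l))%:R * rho i k.

Lemma maxcorrE n (rho : 'M[C]_n) i j k l :
  maxcorr rho (mxtens_index (i, j)) (mxtens_index (k, l)) = ((i == j) && (k == l))%:R * rho i k.
Proof. by rewrite mxE !mxtens_indexK. Qed.

Lemma cnot_tens_delta n (rho : 'M[C]_n.+1) :
  kraus_apply (fun _ : 'I_1 => perm_mx (cnot n)) (rho *t delta_mx 0 0) = maxcorr rho.
Proof.
rewrite kraus_apply_perm; apply/matrixP => r s.
rewrite -[r]mxtens_unindexK -[s]mxtens_unindexK.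
case: (mxtens_unindex r) (mxtens_unindex s) => [i j] [k l].
by rewrite maxcorrE mxE !permE !cnot_indexE tensmxE mxE !subr_eq0 mulrC (eq_sym i) (eq_sym k).
Qed.

Lemma sum_delta_mul n (F : 'I_n -> C) i : \sum_j (i == j)%:R * F j = F i.
Proof.
rewrite (bigD1 i) //= eqxx mul1r big1 ?addr0 // => j /negbTE ij.
by rewrite eq_sym ij mul0r.
Qed.

Lemma mxtrace_tens_maxcorr n (M N rho : 'M[C]_n) :
  \tr ((M *t N) *m maxcorr rho) = \sum_i \sum_k M i k * N i k * rho k i.
Proof.
rewrite /mxtrace big_tens; apply: eq_bigr => i _.
have e j k l : (M *t N) (mxtens_index (i, j)) (mxtens_index (k, l)) *
    maxcorr rho (mxtens_index (k, l)) (mxtens_index (i, j)) =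
    (i == j)%:R * ((k == l)%:R * (M i k * N j l * rho k i)).
  by rewrite tensmxE maxcorrE -mulnb natrM; ring.
under eq_bigr do rewrite mxE big_tens.
under eq_bigr do under eq_bigr do under eq_bigr do rewrite e.
under eq_bigr do under eq_bigr do rewrite -mulr_sumr sum_delta_mul.
by under eq_bigr do rewrite -mulr_sumr; rewrite sum_delta_mul.
Qed.

Definition col2 (x y : C) : 'cV[C]_2 := \col_i (if i == 0 then x else y).

Definition mx2 (a b c d : C) : 'M[C]_2 :=
  \matrix_(i, j) if i == 0 then (if j == 0 then a else b) else (if j == 0 then c else d).

Lemma psd_mx2 (a b d : C) : 0 <= a -> 0 <= d -> b * b^* <= a * d -> psd (mx2 a b b^* d).
Proof.
move=> a_ge0 d_ge0 bad; have [d0|d_neq0] := eqVneq d 0.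
  move: bad; rewrite d0 mulr0 => b_le0.
  have /eqP -> : b == 0 by rewrite -mul_conjC_eq0 eq_le b_le0 mul_conjC_ge0.
  have -> : mx2 a 0 0^* 0 = a *: delta_mx 0 0.
    apply/matrixP => i j; case: (ord2P i) => ->; case: (ord2P j) => ->;
      by rewrite !mxE /= ?conjC0 ?mulr0 ?mulr1.
  by apply: psdZ => //; exact: psd_delta.
have d_gt0 : 0 < d by rewrite lt_def d_neq0.
have dd : d^* = d by rewrite conj_Creal // ger0_real.
have -> : mx2 a b b^* d =
    d^-1 *: (col2 b d *m adjmx (col2 b d)) + (a - b * b^* / d) *: delta_mx 0 0.
  apply/matrixP => i j; case: (ord2P i) => ->; case: (ord2P j) => ->;
    by rewrite !mxE big_ord1 !mxE /= ?dd; field.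
apply: psdD; apply: psdZ.
- by rewrite invr_ge0.
- exact: psd_outer.
- by rewrite subr_ge0 ler_pdivrMr.
- exact: psd_delta.
Qed.

Lemma qubit_state_coherence_le (rho : 'M[C]_2) :
  is_state rho -> rho 0 1 * (rho 0 1)^* <= rho 0 0 * rho 1 1.
Proof.
move=> [[herm qform_ge0] tr1]; set a := rho 0 0; set b := rho 1 1; set c := rho 0 1.
have ca : c^* = rho 1 0 by rewrite hermitian_entry.
have [aN bN] : (- a)^* = - a /\ (- b)^* = - b.
  by split; rewrite conj_Creal // rpredN ger0_real // psd_diag_ge0.
have qform2 x y : (adjmx (col2 x y) *m rho *m col2 x y) 0 0 =
    x^* * a * x + x^* * c * y + y^* * c^* * x + y^* * b * y.
  by rewrite qformE !big_ord2 !mxE /= ca addrA.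
have qa : 0 <= a * (a * b - c * c^*).
  by have := qform_ge0 (col2 c (- a)); rewrite qform2 aN; congr (0 <= _); ring.
have qb : 0 <= b * (a * b - c * c^*).
  by have := qform_ge0 (col2 (- b) c^*); rewrite qform2 bN conjCK; congr (0 <= _); ring.
(* ab - |c|² = (a + b)(ab - |c|²) = qa + qb: no division by a or b is needed. *)
rewrite -subr_ge0 -[_ - _]mul1r -tr1 /mxtrace big_ord2 mulrDl.
exact: addr_ge0.
Qed.

Definition qubit_obs (z w : C) : 'M[C]_2 := mx2 z w w^* (- z).

Definition binary_povm n (O : 'M[C]_n) (a : 'I_2) : 'M[C]_n :=
  2^-1 *: (1%:M + (-1) ^+ a *: O).

Lemma binary_povm_sum n (O : 'M[C]_n) : \sum_a binary_povm O a = 1%:M.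
Proof.
rewrite big_ord2 /binary_povm expr0 expr1 scale1r scaleN1r -scalerDr addrACA subrr addr0.
have -> : 1%:M + 1%:M = 2 *: (1%:M : 'M[C]_n) by rewrite scaler_nat mulr2n.
by rewrite scalerA mulVf ?scale1r // pnatr_eq0.
Qed.

Lemma binary_povm_sub n (O : 'M[C]_n) : binary_povm O 0 - binary_povm O 1 = O.
Proof. by apply/matrixP => i j; rewrite !mxE /=; field. Qed.

Lemma one_add_qubit_obs z w : 1%:M + qubit_obs z w = mx2 (1 + z) w w^* (1 - z).
Proof.
apply/matrixP => i j; case: (ord2P i) => ->; case: (ord2P j) => ->;
  by rewrite !mxE /= ?addr0 ?add0r.
Qed.

Lemma oppr_qubit_obs z w : - qubit_obs z w = qubit_obs (- z) (- w).
Proof.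
apply/matrixP => i j; case: (ord2P i) => ->; case: (ord2P j) => ->;
  by rewrite !mxE /= ?rmorphN.
Qed.

Lemma povm_qubit_obs z w :
  -1 <= z <= 1 -> w * w^* <= 1 - z ^+ 2 -> povm (binary_povm (qubit_obs z w)).
Proof.
have psd_one_add z' w' : -1 <= z' <= 1 -> w' * w'^* <= 1 - z' ^+ 2 ->
    psd (1%:M + qubit_obs z' w').
  move=> /andP[zm zp] ww; rewrite one_add_qubit_obs; apply: psd_mx2.
  - by rewrite addrC -(opprK 1) subr_ge0.
  - by rewrite subr_ge0.
  - by have -> : (1 + z') * (1 - z') = 1 - z' ^+ 2 by ring.
move=> zb ww; split; last exact: binary_povm_sum.
move=> a; apply: psdZ; first by rewrite invr_ge0 ler0n.
case: (ord2P a) => ->; rewrite /= ?expr0 ?expr1 ?scale1r ?scaleN1r ?oppr_qubit_obs.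
  exact: psd_one_add.
apply: psd_one_add; last by rewrite rmorphN mulrNN sqrrN.
by rewrite lerNl opprK lerNl andbC.
Qed.

Definition correlator (p : 'I_2 -> 'I_2 -> 'I_2 -> 'I_2 -> C) (x y : 'I_2) : C :=
  \sum_(a < 2) \sum_(b < 2) (-1) ^+ (a + b)%N * p x y a b.

Definition chsh (p : 'I_2 -> 'I_2 -> 'I_2 -> 'I_2 -> C) : C :=
  correlator p 0 0 + correlator p 0 1 + correlator p 1 0 - correlator p 1 1.

Lemma correlatorE p x y :
  correlator p x y = p x y 0 0 - p x y 0 1 - p x y 1 0 + p x y 1 1.
Proof. by rewrite /correlator !big_ord2 /=; ring. Qed.

Lemma lhv_chsh_le2 p : lhv_model p -> chsh p <= 2.
Proof.
case=> L [q [PA [PB [q_ge0 [q_sum [PA_ge0 [PA_sum [PB_ge0 [PB_sum p_lhv]]]]]]]]].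
pose EA l x := PA l x 0 - PA l x 1; pose EB l y := PB l y 0 - PB l y 1.
have corrE x y : correlator p x y = \sum_l q l * (EA l x * EB l y).
  rewrite correlatorE !p_lhv -!sumrB -big_split /=.
  by apply: eq_bigr => l _; rewrite /EA /EB; ring.
have EA_bounded l x : -1 <= EA l x <= 1.
  by apply: subr_bounded; rewrite // -big_ord2 PA_sum.
have EB_bounded l y : -1 <= EB l y <= 1.
  by apply: subr_bounded; rewrite // -big_ord2 PB_sum.
rewrite /chsh !corrE -!big_split -sumrB /=.
apply: (@le_trans _ _ (\sum_l q l * 2)); last by rewrite -mulr_suml q_sum mul1r.
apply: ler_sum => l _.
have -> : q l * (EA l 0 * EB l 0) + q l * (EA l 0 * EB l 1) + q l * (EA l 1 * EB l 0) -
    q l * (EA l 1 * EB l 1) = q l * (EA l 0 * EB l 0 + EA l 0 * EB l 1 +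
    EA l 1 * EB l 0 - EA l 1 * EB l 1) by ring.
by rewrite ler_wpM2l // chsh_le2.
Qed.

Lemma correlator_maxcorr n (rho : 'M[C]_n) (M N : 'I_2 -> 'I_2 -> 'M[C]_n) x y :
  correlator (fun x y a b => \tr ((M x a *t N y b) *m maxcorr rho)) x y =
  \sum_i \sum_k (M x 0 - M x 1) i k * (N y 0 - N y 1) i k * rho k i.
Proof.
rewrite correlatorE; cbv beta; move: (M x 0) (M x 1) (N y 0) (N y 1) => M0 M1 N0 N1.
rewrite !mxtrace_tens_maxcorr -!sumrB -big_split.
apply: eq_bigr => i _; rewrite -!sumrB -big_split.
by apply: eq_bigr => k _; rewrite !mxE /=; ring.
Qed.

Lemma correlator_binary_maxcorr n (rho : 'M[C]_n) (A B : 'I_2 -> 'M[C]_n) x y :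
  correlator (fun x y a b =>
    \tr ((binary_povm (A x) a *t binary_povm (B y) b) *m maxcorr rho)) x y =
  \sum_i \sum_k A x i k * B y i k * rho k i.
Proof. by rewrite correlator_maxcorr !binary_povm_sub. Qed.

Lemma qubit_obs_maxcorr_correlation (rho : 'M[C]_2) z w z' w' :
  \sum_i \sum_k qubit_obs z w i k * qubit_obs z' w' i k * rho k i =
  \tr rho * z * z' + w * w' * rho 1 0 + w^* * w'^* * rho 0 1.
Proof. by rewrite /mxtrace !big_ord2 !mxE /=; ring. Qed.

Lemma hermitian_qubit_diag (rho : 'M[C]_2) : adjmx rho = rho -> rho 0 1 = 0 -> is_diag rho.
Proof.
move=> herm c0 i j; case: (ord2P i) => ->; case: (ord2P j) => -> // _.
by rewrite hermitian_entry // c0 conjC0.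
Qed.

Lemma maxcorr_nonlocal (rho : 'M[C]_2) :
  is_state rho -> rho 0 1 != 0 -> bell_nonlocal (dA := 2) (dB := 2) (maxcorr rho).
Proof.
move=> st c_neq0; have [psd_rho tr1] := st; have [herm _] := psd_rho.
set c := rho 0 1; set r := c * c^*.
have r_gt0 : 0 < r by rewrite mul_conjC_gt0.
have [rr rN] : r^* = r /\ (- r)^* = - r.
  by split; rewrite conj_Creal // ?rpredN ger0_real // ltW.
have r_le1 : r <= 1.
  have diag_le1 i : rho i i <= 1.
    by case: (ord2P i) => ->; rewrite -tr1 /mxtrace big_ord2 ?lerDl ?lerDr psd_diag_ge0.
  apply: le_trans (qubit_state_coherence_le st) _.
  by rewrite mulr_ile1 ?psd_diag_ge0.
have r2_le1 : r ^+ 2 <= 1 by rewrite exprn_ile1 // ltW.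
pose A (x : 'I_2) := if x == 0 then qubit_obs 1 0 else qubit_obs 0 c.
pose B (y : 'I_2) := qubit_obs (1 - r ^+ 2) (if y == 0 then r else - r).
exists 2, 2, 2, 2, (fun x => binary_povm (A x)), (fun y => binary_povm (B y)); split.
  move=> x; case: (ord2P x) => -> /=; apply: povm_qubit_obs.
  - by rewrite lexx andbT (le_trans (lerN10 _)).
  - by rewrite mul0r expr1n subrr.
  - by rewrite lerN10 ler01.
  - by rewrite expr0n subr0.
split.
  move=> y; apply: povm_qubit_obs.
    apply/andP; split; last by rewrite gerBl exprn_ge0 // ltW.
    by apply: le_trans (lerN10 _) _; rewrite subr_ge0.
  have -> : (if y == 0 then r else - r) * (if y == 0 then r else - r)^* = r ^+ 2.
    by case: ifP; rewrite ?rr ?rN ?mulrNN expr2.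
  rewrite -subr_ge0; have -> : 1 - (1 - r ^+ 2) ^+ 2 - r ^+ 2 = r ^+ 2 * (1 - r ^+ 2) by ring.
  by rewrite mulr_ge0 ?subr_ge0 // exprn_ge0 // ltW.
move/lhv_chsh_le2; rewrite lt_geF; first by [].
rewrite /chsh !correlator_binary_maxcorr !qubit_obs_maxcorr_correlation.
rewrite tr1 conjC0 rr rN (hermitian_entry 0 1 herm) -/c.
set S := (X in _ < X); have -> : S = 2 + 2 * r ^+ 2 by rewrite /S /r; ring.
by rewrite ltrDl mulr_gt0 ?exprn_gt0.
Qed.

End Quantum.

Theorem theorem1 (R : realType) (rhos : 'M[R[i]]_2) :
  is_state rhos ->
  ((exists (k : nat) (K : 'I_k -> 'M[R[i]]_(2 * 2)),
      incoherent_op K /\ bell_nonlocal (dA := 2) (dB := 2) (kraus_apply K (rhos *t proj0 R)))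
   <-> ~ is_diag rhos).
Proof.
move=> st; split.
- case=> k [K [K_incoh nonlocal]] d_rhos.
  apply: (incoherent_state_local _ nonlocal); apply: (incoherent_op_state K_incoh).
  by apply: incoherent_state_tens; [split | exact: incoherent_state_delta].
- move=> not_diag; exists 1, (fun _ => perm_mx (cnot 1)).
  split; first exact: perm_mx_incoherent.
  rewrite /proj0 cnot_tens_delta; apply: maxcorr_nonlocal => //.
  by apply/eqP => c0; apply: not_diag; apply: hermitian_qubit_diag st.1.1 c0.
Qed.
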